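(* Let $G$ be a locally compact group with Haar measure $\nu$, and let $U$ be an open symmetric relatively compact neighborhood of the identity. Let $C\subseteq G$ be a regular compact set with interior $C_0$, and suppose $C_0$ is $U$-connected. If $A\subseteq G$ satisfies $A\cap C_0\neq\emptyset$ and $C\setminus\overline A\neq\emptyset$, then $\nu(\overline A\cap C)<\nu(AU\cap C)$.
   Context: A compact set is regular if it equals the closure of its interior. $\overline A$ is the closure of $A$. A set $S\subseteq G$ is $U$-disconnected if there is $A\subseteq S$ with $A\neq\emptyset$, $A\neq S$ and $AU\cap S=A$; otherwise $S$ is $U$-connected. *)

From mathcomp Require Import all_boot all_order all_algebra.
From mathcomp Require Import all_classical all_reals all_analysis.
Set Implicit Arguments. Unset Strict Implicit. Unset Printing Implicit Defensive.
Import Order.TTheory GRing.Theory Num.Theory.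
Local Open Scope classical_set_scope.
Local Open Scope ring_scope.

Definition topological_group (G : ptopologicalType)
    (mul : G -> G -> G) (inv : G -> G) (e : G) : Prop :=
  [/\ (forall x y z, mul x (mul y z) = mul (mul x y) z),
      (forall x, mul e x = x /\ mul x e = x),
      (forall x, mul (inv x) x = e /\ mul x (inv x) = e),
      continuous (fun p : G * G => mul p.1 p.2) &
      continuous inv].

Definition setmul (G : Type) (mul : G -> G -> G) (A B : set G) : set G :=
  [set z | exists a b, A a /\ B b /\ z = mul a b].

Notation borelG G := (g_sigma_algebraType (@open G)).

Definition haar_measure (R : realType) (G : ptopologicalType)
    (mul : G -> G -> G) (nu : {measure set (borelG G) -> \bar R}) : Prop :=
  [/\ (forall x (A : set (borelG G)), measurable A ->
         nu [set mul x a | a in A] = nu A),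
      (forall K : set G, compact K -> (nu K < +oo)%E),
      (forall A : set (borelG G), measurable A ->
         nu A = ereal_inf [set nu O | O in [set O : set G | open O /\ A `<=` O]]),
      (forall O : set G, open O ->
         nu O = ereal_sup [set nu K | K in [set K : set G | compact K /\ K `<=` O]]) &
      nu [set: borelG G] != 0%E].

Definition regular_compact (G : ptopologicalType) (C : set G) : Prop :=
  compact C /\ C = closure (interior C).

Definition U_disconnected (G : Type) (mul : G -> G -> G) (U S : set G) : Prop :=
  exists A : set G, [/\ A `<=` S, A != set0, A != S & setmul mul A U `&` S = A].

Definition U_connected (G : Type) (mul : G -> G -> G) (U S : set G) : Prop :=
  ~ U_disconnected mul U S.

(** The closure of [A] lies inside [AU], and the U-connectedness of the
    interior [C0] forces [AU] to leave [closure A] inside [C0]: otherwise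
    [closure A ∩ C0] would be a nonempty [U]-closed subset of [C0], hence all
    of [C0], and then [C = closure C0 ⊆ closure A].  So [(AU ∩ C) \ closure A]
    contains a nonempty open set, which has positive Haar measure because
    finitely many of its translates cover any compact set. *)

From mathcomp Require Import all_boot all_order all_algebra.
From mathcomp Require Import all_classical all_reals all_analysis.
Set Implicit Arguments. Unset Strict Implicit. Unset Printing Implicit Defensive.
Import Order.TTheory GRing.Theory Num.Theory.
Local Open Scope classical_set_scope.
Local Open Scope ring_scope.

Lemma U_connected_escape (T : Type) (mul : T -> T -> T) (e : T) (U S F : set T) :
    (forall x, mul x e = x) -> U e -> U_connected mul U S ->
    F `&` S != set0 -> ~ S `<=` F ->
  exists2 z, setmul mul (F `&` S) U z & (S `\` F) z.
Proof.
move=> mulg1 Ue HS FS0 SF; apply: contrapT => noz; apply: HS.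
exists (F `&` S); split => //.
  by apply/eqP => FSS; apply: SF; rewrite -FSS => z [].
apply/seteqP; split => z.
  by move=> [FUz Sz]; split => //; apply: contrapT => Fz; apply: noz; exists z.
by move=> FSz; split; [exists z, e; rewrite mulg1 | case: FSz].
Qed.

Section TopologicalGroup.
Variables (G : ptopologicalType) (mul : G -> G -> G) (inv : G -> G) (e : G).
Hypothesis HG : topological_group mul inv e.

Lemma tg_mulg1 x : mul x e = x.
Proof. by case: HG => _ Id _ _ _; case: (Id x). Qed.

Lemma tg_mulKg x y : mul (inv x) (mul x y) = y.
Proof. by case: HG => As Id Iv _ _; rewrite As (Iv x).1 (Id y).1. Qed.

Lemma tg_mulKVg x y : mul x (mul (inv x) y) = y.
Proof. by case: HG => As Id Iv _ _; rewrite As (Iv x).2 (Id y).1. Qed.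

Lemma continuous_mull y : continuous (mul y).
Proof.
case: HG => _ _ _ Hmul _ z.
apply: (continuous_comp (f := fun z => (y, z)) (g := fun p : G * G => mul p.1 p.2)).
  by apply: cvg_pair; [exact: cvg_cst | exact: cvg_id].
exact: Hmul.
Qed.

Lemma continuous_invmulr c : continuous (fun z => mul (inv z) c).
Proof.
case: HG => _ _ _ Hmul Hinv z.
apply: (continuous_comp (f := inv) (g := fun w => mul w c)); first exact: Hinv.
apply: (continuous_comp (f := fun w => (w, c)) (g := fun p : G * G => mul p.1 p.2)).
  by apply: cvg_pair; [exact: cvg_id | exact: cvg_cst].
exact: Hmul.
Qed.

Lemma open_image_mull y (W : set G) : open W -> open (mul y @` W).
Proof.
move=> oW; have -> : mul y @` W = mul (inv y) @^-1` W.
  apply/seteqP; split => z /=; first by case=> a Wa <-; rewrite tg_mulKg.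
  by move=> Wz; exists (mul (inv y) z) => //; rewrite tg_mulKVg.
exact: (proj1 (continuousP _) (@continuous_mull (inv y)) _ oW).
Qed.

Lemma open_setmul (A U : set G) : open U -> open (setmul mul A U).
Proof.
move=> oU; have -> : setmul mul A U = \bigcup_(a in A) mul a @` U.
  apply/seteqP; split => z /=.
    by case=> a [u [Aa [Uu ->]]]; exists a => //; exists u.
  by case=> a Aa [u Uu <-]; exists a, u.
by apply: bigcup_open => a _; exact: open_image_mull.
Qed.

Lemma closure_mul_setmul (A U : set G) x u :
  open U -> closure A x -> U u -> setmul mul A U (mul x u).
Proof.
move=> oU Ax Uu; set c := mul x u.
have xV : nbhs x ((fun z => mul (inv z) c) @^-1` U).
  apply: open_nbhs_nbhs; split; last by rewrite /= tg_mulKg.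
  exact: (proj1 (continuousP _) (@continuous_invmulr c) _ oU).
have [a [Aa /= Uac]] := Ax _ xV.
by exists a, (mul (inv a) c); rewrite tg_mulKVg.
Qed.

Lemma closure_sub_setmul (A U : set G) :
  open U -> U e -> closure A `<=` setmul mul A U.
Proof.
by move=> oU Ue x Ax; rewrite -[x]tg_mulg1; exact: closure_mul_setmul.
Qed.

Lemma setmul_escapes_closure (A U S : set G) :
    open U -> U e -> U_connected mul U S ->
    A `&` S != set0 -> ~ S `<=` closure A ->
  exists2 w, setmul mul A U w & (S `\` closure A) w.
Proof.
move=> oU Ue HS AS SA.
have clAS : closure A `&` S != set0.
  apply: contra_neq AS; rewrite -!subset0 => clAS0 z [Az Sz].
  by apply: clAS0; split => //; exact: subset_closure.
have [_ [d [u [[clAd _] [Uu ->]]]] Sw] := U_connected_escape tg_mulg1 Ue HS clAS SA.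
by exists (mul d u) => //; exact: closure_mul_setmul.
Qed.

End TopologicalGroup.

Lemma regular_compact_sub (T : ptopologicalType) (C F : set T) :
  regular_compact C -> closed F -> interior C `<=` F -> C `<=` F.
Proof.
by move=> [_ eC] cF /closureS; rewrite -eC -(closure_id F).1.
Qed.

Lemma open_borelG_measurable (G : ptopologicalType) (O : set G) :
  open O -> measurable (O : set (borelG G)).
Proof. by move=> oO; apply: sub_sigma_algebra. Qed.

Lemma closed_borelG_measurable (G : ptopologicalType) (F : set G) :
  closed F -> measurable (F : set (borelG G)).
Proof.
move=> cF; rewrite -(setCK F); apply: measurableC.
by apply: open_borelG_measurable; exact: closed_openC.
Qed.

Lemma measure_lt_subset d (T : measurableType d) (R : realType)
    (mu : {measure set T -> \bar R}) (X Y : set T) :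
    measurable X -> measurable Y -> X `<=` Y ->
    (mu X < +oo)%E -> (0 < mu (Y `\` X))%E ->
  (mu X < mu Y)%E.
Proof.
move=> mX mY XY muX muYX.
have -> : Y = X `|` (Y `\` X).
  apply/seteqP; split => z; last by case=> [/XY|[]].
  by move=> Yz; case: (pselect (X z)) => Xz; [left|right].
rewrite measureU //; first by rewrite lteDl // ge0_fin_numE ?measure_ge0.
- exact: measurableD.
- by apply/seteqP; split => z // [? []].
Qed.

Section HaarMeasure.
Variables (R : realType) (G : ptopologicalType).
Variables (mul : G -> G -> G) (inv : G -> G) (e : G).
Hypothesis HG : topological_group mul inv e.
Hypothesis Hhaus : hausdorff_space G.
Variable nu : {measure set (borelG G) -> \bar R}.
Hypothesis Hnu : haar_measure mul nu.

Lemma haar_compact_null (W : set G) (w : G) : open W -> W w -> nu W = 0%E ->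
  forall K : set G, compact K -> nu K = 0%E.
Proof.
move=> oW Ww nuW K cK; case: Hnu => Hinv _ _ _ _.
set T := fun x => mul (mul x (inv w)) @` W.
have mT x : measurable (T x : set (borelG G)).
  by apply: open_borelG_measurable; exact: (open_image_mull HG _ oW).
have [D _ KD] : finite_subset_cover [set: G] T K.
  move: cK; rewrite compact_cover; apply => [x _|x Kx].
    exact: (open_image_mull HG _ oW).
  exists x => //; exists w => //.
  by case: HG => As _ Iv _ _; rewrite -As (Iv w).1 (tg_mulg1 HG).
apply/eqP; rewrite -measure_le0.
apply: (le_trans (content_sub_fsum nu (finite_fset D) (fun x _ => mT x) _ KD)).
  by apply: closed_borelG_measurable; exact: compact_closed.
by rewrite fsbig1 // => x _; rewrite /T /= Hinv ?nuW //; exact: open_borelG_measurable.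
Qed.

Lemma haar_open_gt0 (W : set G) (w : G) : open W -> W w -> (0 < nu W)%E.
Proof.
move=> oW Ww; rewrite lt0e measure_ge0 andbT; apply/negP => /eqP nuW.
have null_compact := haar_compact_null oW Ww nuW.
case: Hnu => _ _ _ Hinner /eqP; apply.
rewrite Hinner; last exact: openT.
apply/eqP; rewrite eq_le; apply/andP; split.
  by apply/ereal_supP => _ [K [cK _] <-]; rewrite null_compact.
by apply: ereal_sup_ubound; exists set0; [split; [exact: compact0|] | exact: measure0].
Qed.

End HaarMeasure.

Theorem lemma8 (R : realType) (G : ptopologicalType)
    (mul : G -> G -> G) (inv : G -> G) (e : G)
    (HG : topological_group mul inv e)
    (Hlc : locally_compact [set: G]) (Hhaus : hausdorff_space G)
    (nu : {measure set (borelG G) -> \bar R}) (Hnu : haar_measure mul nu)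
    (U : set G) (HUo : open U) (HUe : U e)
    (HUsym : [set inv u | u in U] = U) (HUrc : compact (closure U))
    (C : set G) (HC : regular_compact C)
    (HC0 : U_connected mul U (interior C))
    (A : set G) (HA1 : A `&` interior C != set0)
    (HA2 : C `\` closure A != set0) :
  (nu (closure A `&` C) < nu (setmul mul A U `&` C))%E.
Proof.
set C0 := interior C; set AU := setmul mul A U.
have C0_clA : ~ C0 `<=` closure A.
  move=> /(regular_compact_sub HC (@closed_closure _ A)) CA.
  by move/set0P: HA2 => [z [/CA]].
have [w AUw [C0w clAw]] := setmul_escapes_closure HG HUo HUe HC0 HA1 C0_clA.
have oW : open (AU `&` C0 `&` ~` closure A).
  by apply: openI; [apply: openI; [exact: (open_setmul HG) | exact: open_interior]
                   | exact/closed_openC/closed_closure].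
have mclA : measurable (closure A : set (borelG G)).
  by apply: closed_borelG_measurable; exact: closed_closure.
have mC : measurable (C : set (borelG G)).
  by apply: closed_borelG_measurable; exact: compact_closed HC.1.
have mAU : measurable (AU : set (borelG G)).
  by apply: open_borelG_measurable; exact: (open_setmul HG).
apply: measure_lt_subset.
- exact: measurableI.
- exact: measurableI.
- by move=> z [/(closure_sub_setmul HG HUo HUe) AUz Cz].
- have [_ Hfin _ _ _] := Hnu; apply: le_lt_trans (Hfin C HC.1).
  by apply: le_measure; rewrite ?inE; [exact: measurableI | | move=> z []].
- apply: (lt_le_trans (haar_open_gt0 HG Hhaus Hnu oW (conj (conj AUw C0w) clAw))).
  apply: le_measure; rewrite ?inE.
  + exact: open_borelG_measurable.
  + by apply: measurableD; exact: measurableI.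
  + move=> z [[AUz C0z] clAz]; split; last by case.
    split; [exact: AUz | exact: interior_subset].
Qed.
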